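(* Let $d,k\geq2$. Suppose that $\Lambda\leq\mathrm{AAut}(\mathcal{T}_{d,k})$ contains a translation and that $G\leq\mathrm{AAut}(\mathcal{T}_{d,k})$ commensurates $\Lambda$. Then there exists a proper ball $B\subseteq\partial\mathcal{T}_{d,k}$ such that $[G_B,G_B]\leq\Lambda$. If additionally $L\leq[G_B,G_B]$ is a subgroup with no proper finite index subgroup, then $\Lambda$ contains the subgroup generated by all $G$-conjugates of $L$.
   Context: $\mathcal{T}_{d,k}$ is the rooted tree whose root $r$ has degree $k$ and all other vertices have degree $d+1$. Its boundary $\partial\mathcal{T}_{d,k}$ is the set of rays $(r=\xi_0,\xi_1,\dots)$ with $\xi_{n+1}$ a child of $\xi_n$; with $N(\xi,\xi')$ the largest $n$ such that $\xi_n=\xi'_n$, put $\mathrm{dist}(\xi,\xi')=d^{-N(\xi,\xi')}$. A homothety is a map multiplying all distances by a fixed positive constant. An almost automorphism is a homeomorphism $g$ of $\partial\mathcal{T}_{d,k}$ for which there is a partition of $\partial\mathcal{T}_{d,k}$ into finitely many proper balls $B_1,\dots,B_n$ with each $g|_{B_i}:B_i\to g(B_i)$ a homothety; $\mathrm{AAut}(\mathcal{T}_{d,k})$ is the group of almost automorphisms. An element $h$ is a translation if there is a ball $B$ and $n\in\mathbb{Z}$ with $h^n|_B:B\to h^n(B)$ a homothety and $h^n(B)\subsetneq B$. For a ball $B$, $G_B$ denotes the subgroup of elements of $G$ acting trivially on $\partial\mathcal{T}_{d,k}\setminus B$. $G$ commensurates $\Lambda$ if $g\Lambda g^{-1}\cap\Lambda$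 has finite index in $\Lambda$ for all $g\in G$. *)

From Stdlib Require Import Reals ClassicalEpsilon ZArith List.
Set Implicit Arguments.

(* Boundary of T_{d,k}: a ray (r = xi_0, xi_1, ...) is encoded by the
   sequence of child indices: x 0 < k (children of the root),
   x (S n) < d (children of a non-root vertex).  xi_n is determined by
   x 0, ..., x (n-1). *)
Definition Ray (d k : nat) : Type :=
  {x : nat -> nat | (x 0 < k)%nat /\ forall n, (x (S n) < d)%nat}.

Definition rv {d k : nat} (x : Ray d k) : nat -> nat := proj1_sig x.

(* xi_n = xi'_n *)
Definition agree {d k : nat} (n : nat) (x y : Ray d k) : Prop :=
  forall i, (i < n)%nat -> rv x i = rv y i.

Definition is_dist {d k : nat} (x y : Ray d k) (r : R) : Prop :=
  (x = y /\ r = 0%R) \/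
  (x <> y /\ exists n, agree n x y /\ ~ agree (S n) x y /\ r = (/ (INR d ^ n))%R).

Definition dist {d k : nat} (x y : Ray d k) : R :=
  epsilon (inhabits 0%R) (is_dist x y).

Definition ball {d k : nat} (B : Ray d k -> Prop) : Prop :=
  exists x r, (0 < r)%R /\ forall y, B y <-> (dist x y <= r)%R.

Definition proper_ball {d k : nat} (B : Ray d k -> Prop) : Prop :=
  ball B /\ exists x, ~ B x.

Definition homothety_on {d k : nat} (B : Ray d k -> Prop) (g : Ray d k -> Ray d k) : Prop :=
  exists c, (0 < c)%R /\
    forall x y, B x -> B y -> dist (g x) (g y) = (c * dist x y)%R.

Definition continuous_map {d k : nat} (g : Ray d k -> Ray d k) : Prop :=
  forall x eps, (0 < eps)%R -> exists delta, (0 < delta)%R /\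
    forall y, (dist x y < delta)%R -> (dist (g x) (g y) < eps)%R.

Definition homeo {d k : nat} (g : Ray d k -> Ray d k) : Prop :=
  exists h, (forall x, h (g x) = x) /\ (forall x, g (h x) = x) /\
    continuous_map g /\ continuous_map h.

Definition AAut {d k : nat} (g : Ray d k -> Ray d k) : Prop :=
  homeo g /\
  exists (n : nat) (Bs : nat -> Ray d k -> Prop),
    (forall i, (i < n)%nat -> proper_ball (Bs i) /\ homothety_on (Bs i) g) /\
    (forall x, exists i, (i < n)%nat /\ Bs i x /\
                 forall j, (j < n)%nat -> Bs j x -> j = i).

Definition comp {d k : nat} (g h : Ray d k -> Ray d k) : Ray d k -> Ray d k :=
  fun x => g (h x).

Definition finv {d k : nat} (g : Ray d k -> Ray d k) : Ray d k -> Ray d k :=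
  epsilon (inhabits (fun x : Ray d k => x))
    (fun h => (forall x, h (g x) = x) /\ (forall x, g (h x) = x)).

Fixpoint npow {d k : nat} (g : Ray d k -> Ray d k) (n : nat) : Ray d k -> Ray d k :=
  match n with
  | O => fun x => x
  | S m => comp g (npow g m)
  end.

Definition zpow {d k : nat} (g : Ray d k -> Ray d k) (n : Z) : Ray d k -> Ray d k :=
  match n with
  | Z0 => fun x => x
  | Zpos p => npow g (Pos.to_nat p)
  | Zneg p => npow (finv g) (Pos.to_nat p)
  end.

Definition image {d k : nat} (f : Ray d k -> Ray d k) (B : Ray d k -> Prop) : Ray d k -> Prop :=
  fun y => exists x, B x /\ y = f x.

Definition strict_subset {d k : nat} (A B : Ray d k -> Prop) : Prop :=
  (forall y, A y -> B y) /\ exists y, B y /\ ~ A y.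

Definition translation {d k : nat} (h : Ray d k -> Ray d k) : Prop :=
  exists (B : Ray d k -> Prop) (n : Z),
    ball B /\ homothety_on B (zpow h n) /\ strict_subset (image (zpow h n) B) B.

Definition gset (d k : nat) := (Ray d k -> Ray d k) -> Prop.

Definition subset {d k : nat} (H K : gset d k) : Prop := forall g, H g -> K g.

Definition subgroup {d k : nat} (H : gset d k) : Prop :=
  (forall g, H g -> AAut g) /\
  H (fun x => x) /\
  (forall g h, H g -> H h -> H (comp g h)) /\
  (forall g, H g -> H (finv g)).

Definition finite_index {d k : nat} (H K : gset d k) : Prop :=
  exists reps : list (Ray d k -> Ray d k),
    (forall t, In t reps -> K t) /\
    forall g, K g -> exists t, In t reps /\ exists h, H h /\ g = comp t h.

Definition commensurates {d k : nat} (G Lam : gset d k) : Prop :=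
  forall g, G g ->
    finite_index (fun x => Lam x /\ Lam (comp (finv g) (comp x g))) Lam.

Definition gen {d k : nat} (S : gset d k) : gset d k :=
  fun x => forall H, subgroup H -> subset S H -> H x.

Definition rigid_stab {d k : nat} (G : gset d k) (B : Ray d k -> Prop) : gset d k :=
  fun g => G g /\ forall x, ~ B x -> g x = x.

Definition commutator_subgroup {d k : nat} (H : gset d k) : gset d k :=
  gen (fun x => exists a b, H a /\ H b /\
         x = comp a (comp b (comp (finv a) (finv b)))).

Definition no_proper_finite_index_subgroup {d k : nat} (L : gset d k) : Prop :=
  forall M, subgroup M -> subset M L -> finite_index M L -> subset L M.

Definition conj_closure {d k : nat} (G L : gset d k) : gset d k :=
  gen (fun x => exists g l, G g /\ L l /\ x = comp g (comp l (finv g))).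

From Pilot Require Import Defs.
From Stdlib Require Import Reals ClassicalEpsilon ZArith List.
From Stdlib Require Import Classical FunctionalExtensionality ProofIrrelevance.
From Stdlib Require Import Lia Lra Permutation Wf_nat.
Import Pilot.Defs.

(* A translation in [Lam] yields [f] in [Lam] and a proper ball [B] with
   [f^p B] disjoint from [B] for every [p >= 1]: take [B] small around a point
   of [B0] outside [f B0], which is closed since [f] is a homothety on [B0].
   For [a], [b] in [G_B], commensuration and pigeonhole give a power [phi] of
   [f] with [a phi a^-1] and [b phi^2 b^-1] in [Lam]; as [B], [phi B] and
   [phi^2 B] are disjoint, [[a,b]] is the commutator of [a phi a^-1 phi^-1]
   and [b phi^2 b^-1 phi^-2], both in [Lam].  Finally [L] meets [g^-1 Lam g]
   in a subgroup of finite index of [L], which is all of [L] by hypothesis. *)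

Definition invertible {d k : nat} (g : Ray d k -> Ray d k) : Prop :=
  exists h, (forall x, h (g x) = x) /\ (forall x, g (h x) = x).

Definition conjg {d k : nat} (c g : Ray d k -> Ray d k) : Ray d k -> Ray d k :=
  comp c (comp g (finv c)).

Definition commutator {d k : nat} (a b : Ray d k -> Ray d k) : Ray d k -> Ray d k :=
  comp a (comp b (comp (finv a) (finv b))).

Definition supported {d k : nat} (g : Ray d k -> Ray d k) (B : Ray d k -> Prop) : Prop :=
  forall x, ~ B x -> g x = x.

Definition wandering {d k : nat} (f : Ray d k -> Ray d k) (B : Ray d k -> Prop) : Prop :=
  forall p u, (1 <= p)%nat -> B u -> ~ B (npow f p u).

Definition inter_conj {d k : nat} (Lam : gset d k) (c : Ray d k -> Ray d k) : gset d k :=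
  fun x => Lam x /\ Lam (conjg c x).

Section Bijections.

Context {d k : nat}.
Implicit Types g h : Ray d k -> Ray d k.

Lemma finv_spec g : invertible g ->
  (forall x, finv g (g x) = x) /\ (forall x, g (finv g x) = x).
Proof. exact (epsilon_spec _ _). Qed.

Lemma finv_l g : invertible g -> forall x, finv g (g x) = x.
Proof. now intros Hg; apply finv_spec. Qed.

Lemma finv_r g : invertible g -> forall x, g (finv g x) = x.
Proof. now intros Hg; apply finv_spec. Qed.

Lemma AAut_invertible g : AAut g -> invertible g.
Proof. intros [[h [Hl [Hr _]]] _]; now exists h. Qed.

Lemma invertible_inj g : invertible g -> forall x y, g x = g y -> x = y.
Proof. intros Hg x y E. now rewrite <- (finv_l g Hg x), <- (finv_l g Hg y), E. Qed.

Lemma finv_unique g h : invertible g -> (forall x, h (g x) = x) -> finv g = h.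
Proof.
  intros Hg Hh. extensionality x.
  now rewrite <- (Hh (finv g x)), (finv_r g Hg).
Qed.

Lemma invertible_finv g : invertible g -> invertible (finv g).
Proof. intros Hg. exists g; split; [apply finv_r | apply finv_l]; exact Hg. Qed.

Lemma invertible_comp g h : invertible g -> invertible h -> invertible (comp g h).
Proof.
  intros Hg Hh. exists (comp (finv h) (finv g)); unfold comp; split; intros x.
  - now rewrite (finv_l g Hg), (finv_l h Hh).
  - now rewrite (finv_r h Hh), (finv_r g Hg).
Qed.

Lemma finv_finv g : invertible g -> finv (finv g) = g.
Proof. intros Hg. apply finv_unique; [apply invertible_finv|apply finv_r]; exact Hg. Qed.

Lemma finv_comp g h : invertible g -> invertible h ->
  finv (comp g h) = comp (finv h) (finv g).
Proof.
  intros Hg Hh. apply finv_unique; [now apply invertible_comp|].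
  intros x; unfold comp. now rewrite (finv_l g Hg), (finv_l h Hh).
Qed.

Lemma npow_add g m n x : npow g (m + n) x = npow g m (npow g n x).
Proof. induction m; simpl; unfold comp; congruence. Qed.

Lemma npow_mul g p q x : npow (npow g p) q x = npow g (q * p) x.
Proof.
  induction q; [reflexivity|].
  cbn [npow]; unfold comp. now rewrite IHq, <- npow_add.
Qed.

End Bijections.

Section Subgroups.

Context {d k : nat}.
Implicit Types (H K Lam : gset d k) (g h c : Ray d k -> Ray d k).

Lemma gset_ext H g h : (forall x, g x = h x) -> H g -> H h.
Proof. intros E. now replace h with g by (extensionality x; apply E). Qed.

Lemma subgroup_invertible H g : subgroup H -> H g -> invertible g.
Proof. intros [HA _] Hg. now apply AAut_invertible, HA. Qed.

Lemma subgroup_id H : subgroup H -> H (fun x => x).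
Proof. now intros [_ [Hid _]]. Qed.

Lemma subgroup_comp H g h : subgroup H -> H g -> H h -> H (comp g h).
Proof. intros [_ [_ [Hc _]]]; apply Hc. Qed.

Lemma subgroup_finv H g : subgroup H -> H g -> H (finv g).
Proof. intros [_ [_ [_ Hi]]]; apply Hi. Qed.

Lemma subgroup_ldiv H g h : subgroup H -> H g -> H h -> H (comp (finv g) h).
Proof. intros HH Hg Hh. now apply subgroup_comp; [|apply subgroup_finv|]. Qed.

Lemma subgroup_npow H g n : subgroup H -> H g -> H (npow g n).
Proof.
  intros HH Hg; induction n; cbn [npow]; [exact (subgroup_id H HH) | now apply subgroup_comp].
Qed.

Lemma subgroup_zpow H g n : subgroup H -> H g -> H (zpow g n).
Proof.
  intros HH Hg; destruct n; simpl.
  - now apply subgroup_id.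
  - now apply subgroup_npow.
  - now apply subgroup_npow, subgroup_finv.
Qed.

Lemma subgroup_commutator H g h : subgroup H -> H g -> H h -> H (commutator g h).
Proof.
  intros HH Hg Hh. unfold commutator.
  pose proof (subgroup_finv H g HH Hg). pose proof (subgroup_finv H h HH Hh).
  now do 3 (apply (subgroup_comp H); [exact HH|trivial|]).
Qed.

Lemma subgroup_inter H K : subgroup H -> subgroup K -> subgroup (fun x => H x /\ K x).
Proof.
  intros HH HK; split; [|split; [|split]].
  - intros g [Hg _]. now apply HH.
  - split; now apply subgroup_id.
  - intros g h [Hg Kg] [Hh Kh]; split; now apply subgroup_comp.
  - intros g [Hg Kg]; split; now apply subgroup_finv.
Qed.

Lemma gen_min K (S : gset d k) : subgroup K -> subset S K -> subset (gen S) K.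
Proof. intros HK HS x Hx. now apply Hx. Qed.

Lemma inter_conj_subgroup Lam c : subgroup Lam -> invertible c -> subgroup (inter_conj Lam c).
Proof.
  intros HL Hc; split; [|split; [|split]].
  - intros g [Hg _]. now apply HL.
  - split; [now apply subgroup_id|].
    apply (gset_ext _ (fun x => x)); [|now apply subgroup_id].
    intros x; unfold conjg, comp. now rewrite finv_r.
  - intros g h [Hg Cg] [Hh Ch]; split; [now apply subgroup_comp|].
    apply (gset_ext _ (comp (conjg c g) (conjg c h))); [|now apply subgroup_comp].
    intros x; unfold conjg, comp. now rewrite finv_l.
  - intros g [Hg Cg]; split; [now apply subgroup_finv|].
    assert (Ig : invertible g) by now apply (subgroup_invertible Lam).
    apply (gset_ext _ (finv (conjg c g))); [|now apply subgroup_finv].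
    intros x; unfold conjg.
    rewrite !finv_comp, finv_finv by auto using invertible_comp, invertible_finv.
    reflexivity.
Qed.

Lemma commensurates_inter_conj G Lam g : subgroup G -> commensurates G Lam -> G g ->
  finite_index (inter_conj Lam g) Lam.
Proof.
  intros HG Hcom Gg. pose proof (Hcom (finv g) (subgroup_finv G g HG Gg)) as Hfi.
  now rewrite finv_finv in Hfi by now apply (subgroup_invertible G).
Qed.

End Subgroups.

Section DisjointSupports.

Context {d k : nat}.
Implicit Types (Lam : gset d k) (a b g c phi : Ray d k -> Ray d k)
  (B S T : Ray d k -> Prop).

Lemma supported_invariant g S : invertible g -> supported g S -> forall x, S x -> S (g x).
Proof.
  intros Ig Hg x Sx. apply NNPP; intros Ngx.
  apply Ngx. now rewrite (invertible_inj g Ig _ _ (Hg _ Ngx)).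
Qed.

Lemma commute_of_disjoint_support (g1 g2 : Ray d k -> Ray d k) S T :
  invertible g1 -> invertible g2 -> supported g1 S -> supported g2 T ->
  (forall x, S x -> T x -> False) -> forall x, g1 (g2 x) = g2 (g1 x).
Proof.
  intros I1 I2 H1 H2 D x.
  destruct (classic (S x)) as [Sx|Sx].
  - assert (S (g1 x)) by now apply supported_invariant.
    rewrite (H2 x), (H2 (g1 x)); eauto.
  - rewrite (H1 x Sx). destruct (classic (T x)) as [Tx|Tx].
    + assert (T (g2 x)) by now apply supported_invariant.
      rewrite (H1 (g2 x)); eauto.
    + now rewrite (H2 x Tx), (H1 x Sx).
Qed.

Lemma supported_finv g S : invertible g -> supported g S -> supported (finv g) S.
Proof.
  intros Ig Hg x Sx. apply (invertible_inj g Ig). now rewrite finv_r, Hg.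
Qed.

Lemma supported_conjg c g S : invertible c -> supported g S ->
  supported (conjg c g) (fun x => S (finv c x)).
Proof. intros Ic Hg x Sx. unfold conjg, comp. now rewrite Hg, finv_r. Qed.

Lemma translates_disjoint phi B : invertible phi ->
  (forall u, B u -> ~ B (phi u)) -> (forall u, B u -> ~ B (phi (phi u))) ->
  (forall x, B (finv phi x) -> B x -> False) /\
  (forall x, B (finv (comp phi phi) x) -> B x -> False) /\
  (forall x, B (finv (comp phi phi) x) -> B (finv phi x) -> False).
Proof.
  intros Iphi Push1 Push2.
  assert (Iphi2 : invertible (comp phi phi)) by now apply invertible_comp.
  split; [|split]; intros x Bx Bx'.
  - apply (Push1 _ Bx). now rewrite finv_r.
  - apply (Push2 _ Bx). now rewrite <- (finv_r _ Iphi2 x) in Bx'.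
  - apply (Push1 _ Bx). rewrite <- (finv_r _ Iphi2 x) in Bx'. unfold comp in Bx'.
    now rewrite finv_l in Bx'.
Qed.

(* [U = a phi a^-1 phi^-1] and [V = b phi^2 b^-1 phi^-2] lie in [Lam].  As
   [U = a alpha] and [V = b beta] with [alpha] supported on [phi B] and [beta]
   on [phi^2 B], the supports [B], [phi B], [phi^2 B] are disjoint and force
   [U V = a b (alpha beta)] and [V U = b a (alpha beta)]; hence [[a,b] = [U,V]]. *)
Lemma commutator_mem_of_push Lam a b phi B :
  subgroup Lam -> invertible a -> invertible b -> supported a B -> supported b B ->
  Lam phi -> Lam (conjg a phi) -> Lam (conjg b (comp phi phi)) ->
  (forall u, B u -> ~ B (phi u)) -> (forall u, B u -> ~ B (phi (phi u))) ->
  Lam (commutator a b).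
Proof.
  intros HL Ia Ib Sa Sb Lphi La Lb Push1 Push2.
  assert (Iphi : invertible phi) by now apply (subgroup_invertible Lam).
  destruct (translates_disjoint phi B Iphi Push1 Push2) as [D01 [D02 D12]].
  set (phi2 := comp phi phi) in *.
  assert (Iphi2 : invertible phi2) by now apply invertible_comp.
  set (alpha := conjg phi (finv a)). set (beta := conjg phi2 (finv b)).
  set (U := comp (conjg a phi) (finv phi)). set (V := comp (conjg b phi2) (finv phi2)).
  assert (LU : Lam U) by exact (subgroup_comp _ _ _ HL La (subgroup_finv _ _ HL Lphi)).
  assert (LV : Lam V)
    by exact (subgroup_comp _ _ _ HL Lb (subgroup_finv _ _ HL (subgroup_comp _ _ _ HL Lphi Lphi))).
  assert (IU : invertible U) by now apply (subgroup_invertible Lam).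
  assert (IV : invertible V) by now apply (subgroup_invertible Lam).
  assert (Ialpha : invertible alpha)
    by (unfold alpha, conjg; auto using invertible_comp, invertible_finv).
  assert (Ibeta : invertible beta)
    by (unfold beta, conjg; auto using invertible_comp, invertible_finv).
  assert (Salpha := supported_conjg phi _ B Iphi (supported_finv a B Ia Sa)).
  assert (Sbeta := supported_conjg phi2 _ B Iphi2 (supported_finv b B Ib Sb)).
  assert (C1 : forall x, beta (a x) = a (beta x))
    by (apply (commute_of_disjoint_support _ _ _ _ Ibeta Ia Sbeta Sa); eauto).
  assert (C2 : forall x, beta (alpha x) = alpha (beta x))
    by (apply (commute_of_disjoint_support _ _ _ _ Ibeta Ialpha Sbeta Salpha); eauto).
  assert (C3 : forall x, alpha (b x) = b (alpha x))
    by (apply (commute_of_disjoint_support _ _ _ _ Ialpha Ib Salpha Sb); eauto).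
  apply (gset_ext _ (commutator U V)); [|now apply subgroup_commutator].
  intros x. rewrite <- (finv_r V IV x), <- (finv_r U IU (finv V x)).
  set (y := finv U (finv V x)). unfold commutator at 1, comp at 1 2 3.
  rewrite !finv_l by assumption.
  change (a (alpha (b (beta y))) = commutator a b (b (beta (a (alpha y))))).
  rewrite C1, C2, C3. unfold commutator, comp. now rewrite !finv_l.
Qed.

End DisjointSupports.

Section FiniteIndex.

Context {d k : nat}.
Implicit Types (Lam K L : gset d k) (f t : Ray d k -> Ray d k).

Lemma npow_diff_mem_of_same_coset K f t (h1 h2 : Ray d k -> Ray d k) i j :
  subgroup K -> invertible t -> K h1 -> K h2 ->
  npow f i = comp t h1 -> npow f j = comp t h2 -> (i < j)%nat -> K (npow f (j - i)).
Proof.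
  intros HK It K1 K2 E1 E2 Hij.
  assert (I1 : invertible h1) by now apply (subgroup_invertible K).
  apply (gset_ext _ (comp (finv h1) h2)); [|now apply subgroup_ldiv].
  intros x. apply (invertible_inj h1 I1). unfold comp at 1. rewrite (finv_r h1 I1).
  apply (invertible_inj t It).
  change (comp t h2 x = comp t h1 (npow f (j - i) x)).
  rewrite <- E1, <- E2, <- npow_add. f_equal. lia.
Qed.

(* Pigeonhole on the cosets of [f^0, ..., f^N] with [N] the number of
   coset representatives. *)
Lemma finite_index_pow Lam K f : subgroup Lam -> subgroup K -> finite_index K Lam ->
  Lam f -> exists p, (1 <= p)%nat /\ K (npow f p).
Proof.
  intros HL HK [reps [Hreps Hcov]] Lf.
  set (in_coset := fun i t => exists h, K h /\ npow f i = comp t h).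
  destruct (@Permutation_pigeonhole_rel _ _ in_coset (seq 0 (S (length reps))) reps)
    as [i [j [l [Hperm [t [Ht [[h1 [K1 E1]] [h2 [K2 E2]]]]]]]]].
  - apply Forall_forall. intros i _.
    destruct (Hcov (npow f i) (subgroup_npow Lam f i HL Lf)) as [t [Ht Hh]].
    apply Exists_exists. now exists t.
  - rewrite length_seq. lia.
  - assert (Hij : i <> j).
    { intros <-. pose proof (Permutation_NoDup Hperm (seq_NoDup _ _)) as Hnd.
      inversion Hnd as [|? ? Hi]. now apply Hi; left. }
    assert (It : invertible t) by now apply (subgroup_invertible Lam), Hreps.
    destruct (proj1 (Nat.lt_gt_cases i j) Hij) as [Hlt|Hgt].
    + exists (j - i)%nat. split; [lia|]. now apply (npow_diff_mem_of_same_coset K f t h1 h2).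
    + exists (i - j)%nat. split; [lia|]. now apply (npow_diff_mem_of_same_coset K f t h2 h1).
Qed.

Lemma finite_index_restrict Lam K L : subgroup Lam -> subgroup K -> subgroup L ->
  subset L Lam -> finite_index K Lam -> finite_index (fun x => L x /\ K x) L.
Proof.
  intros HL HK HLs HLsub [reps [Hreps Hcov]].
  set (meets := fun t l => L l /\ exists h, K h /\ l = comp t h).
  destruct (choice (fun t l => L l /\ ((exists l', meets t l') -> meets t l)))
    as [pick Hpick].
  { intros t. destruct (classic (exists l', meets t l')) as [[l' Hl']|Hn].
    - exists l'. split; [apply Hl'|auto].
    - exists (fun x => x). split; [now apply subgroup_id|easy]. }
  exists (map pick reps). split.
  - intros l Hl. apply in_map_iff in Hl as [t [<- _]]. exact (proj1 (Hpick t)).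
  - intros x Lx. destruct (Hcov x (HLsub x Lx)) as [t [Ht [h [Kh Ex]]]].
    destruct (proj2 (Hpick t)) as [Lt [h' [Kh' Et]]]; [exists x; split; eauto|].
    assert (It : invertible t) by now apply (subgroup_invertible Lam), Hreps.
    assert (Ih' : invertible h') by now apply (subgroup_invertible K).
    exists (pick t). split; [now apply in_map|].
    exists (comp (finv (pick t)) x). split; [split|].
    + now apply subgroup_ldiv.
    + apply (gset_ext _ (comp (finv h') h)); [|now apply subgroup_ldiv].
      intros z. rewrite Et, Ex, finv_comp by assumption. unfold comp. now rewrite finv_l.
    + extensionality z. unfold comp. rewrite finv_r; [reflexivity|].
      now apply (subgroup_invertible L).
Qed.

End FiniteIndex.

Section Commensuration.

Context {d k : nat}.
Implicit Types (Lam L : gset d k) (a b f g : Ray d k -> Ray d k) (B : Ray d k -> Prop).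

Lemma wandering_npow f B p : wandering f B -> (1 <= p)%nat -> wandering (npow f p) B.
Proof. intros Hw Hp q u Hq Bu. rewrite npow_mul. apply Hw; [nia|exact Bu]. Qed.

Lemma commutator_mem_of_wandering Lam f B a b :
  subgroup Lam -> Lam f -> wandering f B ->
  invertible a -> invertible b -> supported a B -> supported b B ->
  finite_index (inter_conj Lam a) Lam -> finite_index (inter_conj Lam b) Lam ->
  Lam (commutator a b).
Proof.
  intros HL Lf Hw Ia Ib Sa Sb Fa Fb.
  pose proof (inter_conj_subgroup Lam a HL Ia) as HKa.
  pose proof (inter_conj_subgroup Lam b HL Ib) as HKb.
  destruct (finite_index_pow Lam _ f HL HKa Fa Lf) as [p [Hp Kp]].
  destruct (finite_index_pow Lam _ (npow f p) HL HKb Fb (proj1 Kp)) as [q [Hq Kq]].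
  set (phi := npow (npow f p) q) in Kq.
  assert (Ka : inter_conj Lam a phi) by now apply subgroup_npow.
  assert (Kb : inter_conj Lam b (comp phi phi)) by now apply subgroup_comp.
  assert (Hwphi : wandering phi B) by now apply wandering_npow; [apply wandering_npow|].
  apply (commutator_mem_of_push Lam a b phi B HL Ia Ib Sa Sb (proj1 Ka) (proj2 Ka) (proj2 Kb)).
  - intros u Bu. exact (Hwphi 1%nat u (le_n 1) Bu).
  - intros u Bu. exact (Hwphi 2%nat u ltac:(lia) Bu).
Qed.

Lemma conj_mem_of_no_proper_finite_index_subgroup Lam L g :
  subgroup Lam -> subgroup L -> subset L Lam -> no_proper_finite_index_subgroup L ->
  invertible g -> finite_index (inter_conj Lam g) Lam -> forall l, L l -> Lam (conjg g l).
Proof.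
  intros HL HLs HLsub Hnp Ig Hfi l Ll.
  pose proof (inter_conj_subgroup Lam g HL Ig) as HK.
  enough (Hsub : subset L (fun x => L x /\ inter_conj Lam g x))
    by exact (proj2 (proj2 (Hsub l Ll))).
  apply Hnp.
  - now apply subgroup_inter.
  - now intros x [Lx _].
  - now apply (finite_index_restrict Lam).
Qed.

End Commensuration.

Section Boundary.

Context {d k : nat}.
Implicit Types x y z : Ray d k.

Lemma rv0 x : (rv x 0 < k)%nat.
Proof. exact (proj1 (proj2_sig x)). Qed.

Lemma rvS x n : (rv x (S n) < d)%nat.
Proof. exact (proj2 (proj2_sig x) n). Qed.

Lemma ray_eq x y : (forall i, rv x i = rv y i) -> x = y.
Proof.
  destruct x as [x Hx], y as [y Hy]; unfold rv; simpl; intros E.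
  assert (x = y) as <- by (extensionality i; apply E).
  f_equal. apply proof_irrelevance.
Qed.

Lemma agree_sym n x y : agree n x y -> agree n y x.
Proof. intros H i Hi; symmetry; auto. Qed.

Lemma agree_trans n x y z : agree n x y -> agree n y z -> agree n x z.
Proof. intros H1 H2 i Hi; rewrite H1; auto. Qed.

Lemma agree_le m n x y : (m <= n)%nat -> agree n x y -> agree m x y.
Proof. intros Hmn H i Hi; apply H; lia. Qed.

Lemma least_nat (P : nat -> Prop) : (exists n, P n) ->
  exists j, P j /\ forall i, P i -> (j <= i)%nat.
Proof.
  intros Hex.
  destruct (dec_inh_nat_subset_has_unique_least_element P (fun n => classic (P n)) Hex)
    as [j [Hj _]].
  now exists j.
Qed.

Lemma first_disagreement x y : x <> y -> exists n, agree n x y /\ ~ agree (S n) x y.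
Proof.
  intros Hne. destruct (least_nat (fun n => ~ agree n x y)) as [[|n] [Hn Hmin]].
  - apply NNPP; intros Hall. apply Hne, ray_eq. intros i.
    assert (Hi : agree (S i) x y) by (apply NNPP; intros Hi; apply Hall; now exists (S i)).
    apply Hi; lia.
  - now exfalso; apply Hn; intros i Hi.
  - exists n. split; [|exact Hn]. apply NNPP; intros Hn'. specialize (Hmin n Hn'). lia.
Qed.

Lemma dist_spec x y : is_dist x y (dist x y).
Proof.
  unfold dist. apply epsilon_spec. destruct (classic (x = y)) as [E|E].
  - exists 0%R; now left.
  - destruct (first_disagreement x y E) as [n Hn].
    exists (/ INR d ^ n)%R; right; split; [exact E|]. now exists n.
Qed.

Lemma ray_complete (xs : nat -> Ray d k) :
  (forall L, exists T, forall s u, (T <= s)%nat -> (T <= u)%nat -> agree L (xs s) (xs u)) ->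
  exists l, forall n, exists s0, forall s, (s0 <= s)%nat -> agree n l (xs s).
Proof.
  intros Hcauchy. destruct (choice _ Hcauchy) as [T HT].
  set (digit := fun i => rv (xs (T (S i))) i).
  assert (Hdigit : forall i s, (T (S i) <= s)%nat -> rv (xs s) i = digit i).
  { intros i s Hs. symmetry. apply (HT (S i)); lia. }
  exists (exist _ digit (conj (rv0 _) (fun n => rvS _ n))).
  induction n as [|n [s0 Hs0]]; [exists 0%nat; intros s _ i Hi; lia|].
  exists (Nat.max s0 (T (S n))). intros s Hs i Hi.
  destruct (Nat.eq_dec i n) as [->|Hne].
  - symmetry. apply Hdigit. lia.
  - apply (Hs0 s); lia.
Qed.

End Boundary.

Section Metric.

Context {d k : nat}.
Hypothesis Hd : (2 <= d)%nat.
Implicit Types (x y z : Ray d k) (B : Ray d k -> Prop) (f : Ray d k -> Ray d k).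

Local Open Scope R_scope.

Lemma dpow_pos n : 0 < INR d ^ n.
Proof. apply pow_lt. apply le_INR in Hd. simpl in Hd. lra. Qed.

Lemma inv_dpow_pos n : 0 < / INR d ^ n.
Proof. apply Rinv_0_lt_compat, dpow_pos. Qed.

Lemma inv_dpow_le_iff m n : / INR d ^ n <= / INR d ^ m <-> (m <= n)%nat.
Proof.
  assert (H1 : 1 < INR d) by (apply le_INR in Hd; simpl in Hd; lra).
  split; intros H.
  - destruct (le_lt_dec m n) as [|Hlt]; [assumption|exfalso].
    assert (INR d ^ n < INR d ^ m) by now apply Rlt_pow.
    assert (/ INR d ^ m < / INR d ^ n)
      by (apply Rinv_lt_contravar; auto using Rmult_lt_0_compat, dpow_pos).
    lra.
  - apply Rinv_le_contravar; [apply dpow_pos|]. apply Rle_pow; [lra|assumption].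
Qed.

Lemma inv_dpow_small e : 0 < e -> exists n, / INR d ^ n <= e.
Proof.
  intros He. assert (H1 : 1 < INR d) by (apply le_INR in Hd; simpl in Hd; lra).
  destruct (Pow_x_infinity (INR d)) with (b := / e) as [N HN]; [rewrite Rabs_pos_eq; lra|].
  exists N. specialize (HN N (le_n N)). rewrite Rabs_pos_eq in HN by (left; apply dpow_pos).
  rewrite <- (Rinv_inv e). apply Rinv_le_contravar; [now apply Rinv_0_lt_compat|lra].
Qed.

Lemma scaled_inv_dpow_small c L : 0 < c -> exists L', c * / INR d ^ L' <= / INR d ^ L.
Proof.
  intros Hc.
  destruct (inv_dpow_small (/ INR d ^ L * / c)) as [L' HL'].
  { apply Rmult_lt_0_compat; [apply inv_dpow_pos|now apply Rinv_0_lt_compat]. }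
  exists L'. apply Rmult_le_compat_l with (r := c) in HL'; [|lra].
  rewrite (Rmult_comm (/ INR d ^ L)), <- Rmult_assoc, Rinv_r, Rmult_1_l in HL' by lra.
  exact HL'.
Qed.

Lemma agree_iff_dist j x y : agree j x y <-> dist x y <= / INR d ^ j.
Proof.
  destruct (dist_spec x y) as [[<- ->]|[_ [n [Hn [Hn' ->]]]]].
  - split; intros _; [left; apply inv_dpow_pos|now intros i _].
  - rewrite inv_dpow_le_iff. split; intros H.
    + destruct (le_lt_dec j n) as [|Hlt]; [assumption|].
      exfalso; apply Hn'. now apply (agree_le _ j); [lia|].
    + now apply (agree_le _ n).
Qed.

Lemma ball_cylinder B : ball B -> exists c j, forall z, B z <-> agree j c z.
Proof.
  intros [c [r [Hr HB]]].
  destruct (least_nat (fun n => / INR d ^ n <= r)) as [j [Hj Hmin]];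
    [now apply inv_dpow_small|].
  exists c, j. intros z. rewrite HB, agree_iff_dist. split; intros H; [|lra].
  destruct (dist_spec c z) as [[_ ->]|[_ [n [_ [_ Ez]]]]]; [left; apply inv_dpow_pos|].
  rewrite Ez in *. apply inv_dpow_le_iff. now apply Hmin.
Qed.

Lemma cylinder_proper_ball (Hk : (2 <= k)%nat) j y : (1 <= j)%nat ->
  proper_ball (fun z => agree j y z).
Proof.
  intros Hj. split.
  - exists y, (/ INR d ^ j). split; [apply inv_dpow_pos|]. intros z. apply agree_iff_dist.
  - set (w := fun i => match i with O => if Nat.eq_dec (rv y 0) 0 then 1%nat else 0%nat
                                   | S _ => 0%nat end).
    assert (Hw : (w 0 < k)%nat /\ forall n, (w (S n) < d)%nat).
    { unfold w; split; [destruct Nat.eq_dec|]; intros; lia. }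
    exists (exist _ w Hw). intros Hy. specialize (Hy 0%nat ltac:(lia)).
    unfold rv at 2, w in Hy; simpl in Hy. destruct Nat.eq_dec; lia.
Qed.

Lemma homothety_agree_reflect B f : homothety_on B f -> forall L, exists L',
  forall a b, B a -> B b -> agree L' (f a) (f b) -> agree L a b.
Proof.
  intros [c [Hc Hf]] L.
  destruct (scaled_inv_dpow_small (/ c) L) as [L' HL']; [now apply Rinv_0_lt_compat|].
  exists L'. intros a b Ba Bb Hab. apply agree_iff_dist. apply agree_iff_dist in Hab.
  rewrite Hf in Hab by assumption.
  apply Rle_trans with (/ c * / INR d ^ L'); [|exact HL'].
  apply Rmult_le_reg_l with c; [exact Hc|].
  rewrite <- Rmult_assoc, Rinv_r, Rmult_1_l by lra. exact Hab.
Qed.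

Lemma homothety_agree_preserve B f : homothety_on B f -> forall L, exists L',
  forall a b, B a -> B b -> agree L' a b -> agree L (f a) (f b).
Proof.
  intros [c [Hc Hf]] L. destruct (scaled_inv_dpow_small c L Hc) as [L' HL'].
  exists L'. intros a b Ba Bb Hab. apply agree_iff_dist. apply agree_iff_dist in Hab.
  rewrite Hf by assumption.
  apply Rle_trans with (c * / INR d ^ L'); [apply Rmult_le_compat_l; lra|exact HL'].
Qed.

End Metric.

Section Translations.

Context {d k : nat}.
Hypothesis Hd : (2 <= d)%nat.
Implicit Types (y z : Ray d k) (B : Ray d k -> Prop) (f : Ray d k -> Ray d k).

(* The image of a ball under a homothety is closed: preimages of points
   approaching [y] form a Cauchy sequence, whose limit is mapped to [y]. *)
Lemma image_complement_open B f y : ball B -> homothety_on B f -> ~ image f B y ->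
  exists t, forall z, agree t y z -> ~ image f B z.
Proof.
  intros HB Hf Hy. destruct (ball_cylinder Hd B HB) as [c [j Hcyl]].
  apply NNPP; intros Hn.
  assert (Happrox : forall t, exists x, B x /\ agree t y (f x)).
  { intros t. apply NNPP; intros Hx. apply Hn. exists t. intros z Hz [x [Bx ->]].
    apply Hx. now exists x. }
  destruct (choice _ Happrox) as [xs Hxs].
  destruct (ray_complete xs) as [l Hl].
  { intros L. destruct (homothety_agree_reflect Hd B f Hf L) as [L' HL'].
    exists L'. intros s u Hs Hu. apply HL'; [apply Hxs|apply Hxs|].
    apply (agree_trans _ _ y).
    - apply agree_sym, (agree_le _ s); [exact Hs|apply Hxs].
    - apply (agree_le _ u); [exact Hu|apply Hxs]. }
  assert (Bl : B l).
  { destruct (Hl j) as [s0 Hs0]. apply Hcyl, (agree_trans _ _ (xs s0)).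
    - apply Hcyl, Hxs.
    - now apply agree_sym, Hs0. }
  apply Hy. exists l. split; [exact Bl|]. apply ray_eq. intros i.
  destruct (homothety_agree_preserve Hd B f Hf (S i)) as [L' HL'].
  destruct (Hl L') as [s0 Hs0]. set (s := Nat.max s0 (S i)).
  transitivity (rv (f (xs s)) i).
  - apply (proj2 (Hxs s)). lia.
  - symmetry. apply (HL' l (xs s) Bl (proj1 (Hxs s))); [apply Hs0|]; lia.
Qed.

(* A small ball around a point of [B0] outside [f B0] misses [f B0], into
   which every positive power of [f] maps it. *)
Lemma wandering_ball_of_translation (Hk : (2 <= k)%nat) (Lam : gset d k) h :
  subgroup Lam -> Lam h -> translation h ->
  exists f, Lam f /\ exists B, proper_ball B /\ wandering f B.
Proof.
  intros HL Lh [B0 [n [HB0 [Hhom [Hsub [y [By Hy]]]]]]].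
  set (f := zpow h n). exists f. split; [now apply subgroup_zpow|].
  destruct (ball_cylinder Hd B0 HB0) as [c [j Hcyl]].
  destruct (image_complement_open B0 f y HB0 Hhom Hy) as [t Ht].
  exists (fun z => agree (S (t + j)) y z).
  split; [apply cylinder_proper_ball; auto; lia|].
  assert (Hin : forall u, agree (S (t + j)) y u -> B0 u).
  { intros u Hu. apply Hcyl, (agree_trans _ _ y); [now apply Hcyl|].
    apply (agree_le _ (S (t + j))); [lia|exact Hu]. }
  assert (Hstay : forall q u, B0 u -> B0 (npow f q u)).
  { induction q; intros u Hu; [exact Hu|]. apply Hsub. now exists (npow f q u); split; auto. }
  intros [|q] u Hp Hu Hfu; [lia|].
  apply (Ht (npow f (S q) u)).
  - apply (agree_le _ (S (t + j))); [lia|exact Hfu].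
  - exists (npow f q u). split; [now apply Hstay, Hin|reflexivity].
Qed.

End Translations.

Theorem mainTheorem16 (d k : nat) (Lam G : gset d k) :
  (2 <= d)%nat -> (2 <= k)%nat ->
  subgroup Lam -> subgroup G ->
  (exists h, Lam h /\ translation h) ->
  commensurates G Lam ->
  exists B : Ray d k -> Prop,
    proper_ball B /\
    subset (commutator_subgroup (rigid_stab G B)) Lam /\
    (forall L : gset d k,
        subgroup L ->
        subset L (commutator_subgroup (rigid_stab G B)) ->
        no_proper_finite_index_subgroup L ->
        subset (conj_closure G L) Lam).
Proof.
  intros Hd Hk HL HG [h [Lh Th]] Hcom.
  destruct (wandering_ball_of_translation Hd Hk Lam h HL Lh Th) as [f [Lf [B [HB Hw]]]].
  assert (Hcomm : subset (commutator_subgroup (rigid_stab G B)) Lam).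
  { apply gen_min; [exact HL|]. intros _ [a [b [[Ga Sa] [[Gb Sb] ->]]]].
    apply (commutator_mem_of_wandering Lam f B); try assumption;
      solve [now apply (subgroup_invertible G) | now apply (commensurates_inter_conj G)]. }
  exists B. split; [exact HB|]. split; [exact Hcomm|].
  intros L HLs HLsub Hnp. apply gen_min; [exact HL|].
  intros _ [g [l [Gg [Ll ->]]]].
  apply (conj_mem_of_no_proper_finite_index_subgroup Lam L g); auto.
  - intros x Lx. now apply Hcomm, HLsub.
  - now apply (subgroup_invertible G).
  - now apply (commensurates_inter_conj G).
Qed.
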